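(* Let $\tau\in\mathbb N$, $\tau\ge1$. Let $\widehat C_a=\left(\frac{y\eta_{c,a}D}{\eta_{p,a}c_bc_2(1-p)}\right)^{\frac1{p+y-1}}$ and assume $\eta_{p,a}c_bc_2(1-p)(2-p)\ge Dy(y+1)\eta_{c,a}$, $y>1-p$, and $\Phi\ge0$. Let $\widetilde C_a=\arg\max_{C_a\in\{\lfloor\widehat C_a\rfloor,\lceil\widehat C_a\rceil\}}\underline U_a(C_a,\widetilde\Delta)$ be the attacker's robust equilibrium attacking extent (with $\widetilde\Delta$ the defenders' robust equilibrium protection extents). If $$\eta_{p,a}c_bc_2(1-p)\ge y\eta_{c,a}D\,\tau^{1-p-y},$$ then $\widehat C_a\le\tau$ and $\widetilde C_a\le\tau$, i.e. a $\tau$-equilibrium is achieved.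
   Context: Setting: a finite set $\mathcal C$ of defenders and one attacker. Defender $k$ chooses protection extent $\Delta_k\in[0,D]$; the attacker chooses attacking extent (number of rounds) $C_a\ge0$. Constants: $D>0$, $c_a,c_b,c_0,c_2>0$, $p\in(0,1)$, $x>0$, $y\ge0$; preference weights $\eta_{m,k},\eta_{p,k},\eta_{c,k}\in[0,1]$ summing to $1$, and $\eta_{p,a},\eta_{c,a}\in(0,1]$ with $\eta_{p,a}+\eta_{c,a}=1$. Protection cost $C(\Delta_k)=\Delta_k^x$, attacking cost $E(C_a)=1-C_a^{-y}$. The attacker's lower-bound payoff is, for $C_a>0$, $\underline U_a(C_a,\Delta)=\eta_{p,a}\sum_{k\in\mathcal C}\Big(1-\frac{c_b\Delta_k+c_bc_2C_a^{p-1}}{D}\Big)-\eta_{c,a}|\mathcal C|E(C_a)$, and $0$ for $C_a=0$. Robust equilibrium uses the infimum operator: each player maximizes his own lower-bound payoff given the others' strategies. A $\tau$-equilibrium is a robust equilibrium in which the attacker's attacking extent does not exceed $\tau$. $\Phi:=\frac{D}{c_b}|\mathcal C|-c_2|\mathcal C|\widehat C_a^{\,p-1}-\frac{\eta_{c,a}|\mathcal C|D}{\eta_{p,a}c_b}+\frac{\eta_{c,a}|\mathcal C|D}{\widehat C_a^{\,y}\eta_{p,a}c_b}$. *)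

From mathcomp Require Import all_boot all_order all_algebra.
From mathcomp Require Import all_classical all_reals all_analysis.
Set Implicit Arguments. Unset Strict Implicit. Unset Printing Implicit Defensive.
Import Order.TTheory GRing.Theory Num.Theory.
Local Open Scope ring_scope.

Section Defs.
Variables (R : realType) (Cset : finType).

Definition attack_cost (y Ca : R) : R := 1 - Ca `^ (- y).

Definition Ua_lb (D cb c2 p y etapa etaca : R) (Ca : R) (Delta : Cset -> R) : R :=
  if Ca == 0 then 0 else
  etapa * \sum_(k : Cset) (1 - (cb * Delta k + cb * c2 * Ca `^ (p - 1)) / D)
  - etaca * #|Cset|%:R * attack_cost y Ca.

Definition Chat (D cb c2 p y etapa etaca : R) : R :=
  (y * etaca * D / (etapa * cb * c2 * (1 - p))) `^ (1 / (p + y - 1)).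

Definition Phi (D cb c2 p y etapa etaca : R) : R :=
  let Ch := Chat D cb c2 p y etapa etaca in
  let n := (#|Cset|)%:R : R in
  D / cb * n - c2 * n * Ch `^ (p - 1) - etaca * n * D / (etapa * cb)
  + etaca * n * D / (Ch `^ y * etapa * cb).
End Defs.

From mathcomp Require Import all_boot all_order all_algebra.
From mathcomp Require Import all_classical all_reals all_analysis.
From mathcomp Require Import lra.
Import Order.TTheory GRing.Theory Num.Theory.
Local Open Scope ring_scope.

(* Write s := p + y - 1 > 0 and K := eta_{p,a} c_b c_2 (1 - p) > 0,
   so that  Chat = (y eta_{c,a} D / K)^(1/s).  The hypothesis
   y eta_{c,a} D tau^(1-p-y) <= K  reads  y eta_{c,a} D / K <= tau^s, and since
   u |-> u^(1/s) is monotone on [0, +oo) and inverts u |-> u^s, this gives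
   Chat <= tau.  The attacker's extent Ct is either the floor or the ceiling of
   Chat; both are bounded by any natural number bounding Chat, so Ct <= tau.
   The file first proves the two general facts used here (taking an s-th root
   of an inequality, and rounding below a natural-number bound), then derives the
   theorem. *)

Section RootBound.
Variable R : realType.

Lemma root_le_of_le_powR (a t s : R) :
  0 <= a -> 0 <= t -> 0 < s -> a <= t `^ s -> a `^ (1 / s) <= t.
Proof.
move=> a_ge0 t_ge0 s_gt0 a_le.
have root_pow : (t `^ s) `^ (1 / s) = t.
  by rewrite -powRrM mul1r mulfV ?gt_eqF // powRr1.
rewrite -[leRHS]root_pow.
by apply: ge0_ler_powR; rewrite ?nnegrE ?powR_ge0 // divr_ge0 // ltW.
Qed.

Lemma div_le_powR_of_mul_powRN (c K t s : R) :
  0 < K -> 0 < t -> c * t `^ (- s) <= K -> c / K <= t `^ s.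
Proof.
move=> K_gt0 t_gt0; have ts_gt0 : 0 < t `^ s by exact: powR_gt0.
rewrite powRN -(ler_pM2r ts_gt0) divfK ?gt_eqF // => c_le.
by rewrite ler_pdivrMr // mulrC.
Qed.

End RootBound.

Lemma rounding_le_nat (R : realType) (z C : R) (n : nat) :
  z <= n%:R -> C = (Num.floor z)%:~R \/ C = (Num.ceil z)%:~R -> C <= n%:R.
Proof.
move=> z_le [->|->]; first exact: le_trans (floor_le _) z_le.
have -> : n%:R = (n%:Z)%:~R :> R by [].
by rewrite ler_int ceil_le_int.
Qed.

Theorem mainTheorem5 (R : realType) (Cset : finType)
  (D ca cb c0 c2 p x y etapa etaca : R)
  (etam etap etac : Cset -> R) (tau : nat)
  (hD : 0 < D) (hca : 0 < ca) (hcb : 0 < cb) (hc0 : 0 < c0) (hc2 : 0 < c2)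
  (hp : 0 < p < 1) (hx : 0 < x) (hy : 0 <= y)
  (hetak : forall k, [/\ 0 <= etam k <= 1, 0 <= etap k <= 1, 0 <= etac k <= 1
                      & etam k + etap k + etac k = 1])
  (hetapa : 0 < etapa <= 1) (hetaca : 0 < etaca <= 1) (hetaa : etapa + etaca = 1)
  (htau : (1 <= tau)%N)
  (hconc : D * y * (y + 1) * etaca <= etapa * cb * c2 * (1 - p) * (2 - p))
  (hy1p : 1 - p < y)
  (hPhi : 0 <= Phi Cset D cb c2 p y etapa etaca)
  (Deltat : Cset -> R) (hDeltat : forall k, 0 <= Deltat k <= D)
  (Ct : R)
  (hCt : Ct = (Num.floor (Chat D cb c2 p y etapa etaca))%:~R
         \/ Ct = (Num.ceil (Chat D cb c2 p y etapa etaca))%:~R)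
  (hCtmax : forall C : R,
      C = (Num.floor (Chat D cb c2 p y etapa etaca))%:~R
      \/ C = (Num.ceil (Chat D cb c2 p y etapa etaca))%:~R ->
      Ua_lb D cb c2 p y etapa etaca C Deltat <= Ua_lb D cb c2 p y etapa etaca Ct Deltat)
  (hcond : y * etaca * D * (tau%:R : R) `^ (1 - p - y) <= etapa * cb * c2 * (1 - p)) :
  Chat D cb c2 p y etapa etaca <= tau%:R /\ Ct <= tau%:R.
Proof.
have [p_gt0 p_lt1] := andP hp; have [etapa_gt0 _] := andP hetapa.
have [etaca_gt0 _] := andP hetaca.
have tau_gt0 : 0 < tau%:R :> R by rewrite ltr0n.
have K_gt0 : 0 < etapa * cb * c2 * (1 - p) by rewrite !mulr_gt0 // subr_gt0.
have s_gt0 : 0 < p + y - 1 by lra.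
have base_ge0 : 0 <= y * etaca * D / (etapa * cb * c2 * (1 - p)).
  by rewrite divr_ge0 ?(ltW K_gt0) // !mulr_ge0 // ltW.
have base_le : y * etaca * D / (etapa * cb * c2 * (1 - p)) <= tau%:R `^ (p + y - 1).
  apply: div_le_powR_of_mul_powRN => //.
  by rewrite (_ : - (p + y - 1) = 1 - p - y) //; lra.
have Chat_le : Chat D cb c2 p y etapa etaca <= tau%:R.
  exact: root_le_of_le_powR base_ge0 (ltW tau_gt0) s_gt0 base_le.
split => //.
exact: rounding_le_nat Chat_le hCt.
Qed.
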